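(* A regular semigroup is a generalized inverse semigroup if and only if it is isomorphic to a subsemigroup of a $\lambda$-semidirect product $K\rtimes_\lambda T$ of a rectangular band $K$ by an inverse semigroup $T$ (with respect to some action of $T$ on $K$).
   Context: A generalized inverse semigroup is an orthodox semigroup (regular semigroup whose idempotents form a subsemigroup) whose set of idempotents is a normal band ($efge=egfe$ for all idempotents $e,f,g$). A rectangular band is a semigroup satisfying $xx=x$ and $xyz=xz$. Let $K$ be a semigroup and $T$ an inverse semigroup; $T$ acts on $K$ if an antihomomorphism $t\mapsto\varepsilon_t$ from $T$ into the endomorphism monoid of $K$ is given (so $\varepsilon_u\varepsilon_t=\varepsilon_{tu}$); write ${}^t a$ for $a\varepsilon_t$. The $\lambda$-semidirect product $K\rtimes_\lambda T$ is the set $\{(a,t)\in K\times T: {}^{tt^{-1}}a=a\}$ with multiplication $(a,t)(b,u)=({}^{(tu)(tu)^{-1}}a\cdot {}^t b,\ tu)$. *)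

Set Implicit Arguments.

Section Semigroups.
Variable S : Type.
Variable m : S -> S -> S.

Definition associative_op : Prop := forall x y z, m x (m y z) = m (m x y) z.

Definition idempotent (e : S) : Prop := m e e = e.

Definition regular : Prop := forall a, exists x, m (m a x) a = a.

Definition orthodox : Prop :=
  regular /\ forall e f, idempotent e -> idempotent f -> idempotent (m e f).

Definition idempotents_normal_band : Prop :=
  forall e f g, idempotent e -> idempotent f -> idempotent g ->
    m (m (m e f) g) e = m (m (m e g) f) e.

Definition generalized_inverse : Prop := orthodox /\ idempotents_normal_band.

Definition rectangular_band : Prop :=
  (forall x, m x x = x) /\ (forall x y z, m (m x y) z = m x z).

(* inverse semigroup, presented with its inversion map: inv t is an inverse
   of t (t t' t = t, t' t t' = t') and it is the unique such inverse. *)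
Definition inverse_semigroup_with (inv : S -> S) : Prop :=
  (forall t, m (m t (inv t)) t = t /\ m (m (inv t) t) (inv t) = inv t) /\
  (forall t s, m (m t s) t = t -> m (m s t) s = s -> s = inv t).

End Semigroups.

Section Action.
Variables (K T : Type) (mK : K -> K -> K) (mT : T -> T -> T).

(* t |-> eps_t, each eps_t an endomorphism of K, antihomomorphism into
   End(K) written on the right: eps_u eps_t = eps_{tu}, i.e.
   ^{tu} a = ^t (^u a), where act t a = ^t a = a eps_t. *)
Definition semigroup_action (act : T -> K -> K) : Prop :=
  (forall t a b, act t (mK a b) = mK (act t a) (act t b)) /\
  (forall t u a, act (mT t u) a = act t (act u a)).

Variables (inv : T -> T) (act : T -> K -> K).

Definition lsd_carrier (p : K * T) : Prop :=
  act (mT (snd p) (inv (snd p))) (fst p) = fst p.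

Definition lsd_mul (p q : K * T) : K * T :=
  let tu := mT (snd p) (snd q) in
  (mK (act (mT tu (inv tu)) (fst p)) (act (snd p) (fst q)), tu).

End Action.

From Stdlib Require Import FunctionalExtensionality PropExtensionality ProofIrrelevance
  IndefiniteDescription.
Set Implicit Arguments.

(* Let a ~ b when a and b have the same inverses.  In a generalized inverse
   semigroup S this is a congruence, and T = S/~ is an inverse semigroup: every
   idempotent class contains an idempotent, and ef ~ fe for idempotents e, f.
   Idempotents e ~ f are interchangeable between any two factors, x e y = x f y,
   so T acts on left and on right translations by idempotents of S (each tagged
   by an element of T).  With K the rectangular band of pairs (left part, right
   part), sending x to the translations by xx' and x'x together with x~ embeds S
   into K ⋊_λ T; it is injective because x' is an inverse of every element of x~.
   Conversely, the idempotents of K ⋊_λ T are the pairs (a, e) with e idempotent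
   and ^e a = a; they are closed under products and satisfy efge = egfe, and both
   properties pass to a semigroup embedded in K ⋊_λ T. *)

Ltac with_assoc k :=
  match goal with A : associative_op ?op |- context [?op _ _] => k A op end.

Ltac assoc_norm := with_assoc ltac:(fun A op => repeat rewrite A).

Ltac assoc_norm_in H :=
  match goal with
  | A : associative_op ?op |- _ =>
      match type of H with context [op _ _] => repeat rewrite A in H end
  end.

Ltac prefix_word op P t :=
  lazymatch t with
  | op ?u ?v => let u' := prefix_word op P u in constr:(op u' v)
  | _ => constr:(op P t)
  end.

(* Products are kept left-associated, where an equation [l = r] matches only
   prefixes of words; its re-associated form [P l = P r] matches [l] elsewhere. *)
Ltac rewrite_in_word A op H :=
  first
    [ rewrite H
    | lazymatch type of H with
      | @eq ?T ?l ?r =>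
          let HP := fresh "HP" in
          assert (HP : forall P : T,
                    ltac:(let a := prefix_word op P l in
                          let b := prefix_word op P r in exact (a = b)));
          [ let P := fresh "P" in let E := fresh "E" in
            intro P; pose proof (f_equal (op P) H) as E;
            repeat rewrite A in E; exact E
          | rewrite HP; clear HP ]
      end ].

Tactic Notation "rw_word" constr(t) :=
  with_assoc ltac:(fun A op =>
    let H := fresh "H" in
    pose proof t as H; try unfold idempotent in H; repeat rewrite A in H;
    rewrite_in_word A op H; clear H).

Tactic Notation "rw_word" "<-" constr(t) :=
  with_assoc ltac:(fun A op =>
    let H := fresh "H" in
    pose proof t as H; try unfold idempotent in H; repeat rewrite A in H;
    symmetry in H; rewrite_in_word A op H; clear H).

Ltac via E := transitivity E; [symmetry; assoc_norm | assoc_norm].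

(* [image g] serves as the quotient of [A] by the kernel of [g]. *)
Section Image.
Variables (A B : Type) (g : A -> B).

Definition image : Type := {y : B | exists a, y = g a}.

Definition im (a : A) : image := exist _ (g a) (ex_intro _ a eq_refl).

Definition repr (y : image) : A :=
  proj1_sig (constructive_indefinite_description _ (proj2_sig y)).

Lemma im_eq a b : g a = g b -> im a = im b.
Proof. intro E. apply subset_eq_compat. exact E. Qed.

Lemma im_inj a b : im a = im b -> g a = g b.
Proof. intro E. exact (f_equal (@proj1_sig _ _) E). Qed.

Lemma im_repr y : im (repr y) = y.
Proof.
  destruct y as [b Hb]. unfold repr; simpl.
  destruct (constructive_indefinite_description _ _) as [a Ha]; simpl.
  apply subset_eq_compat. symmetry. exact Ha.
Qed.

Lemma repr_im a : g (repr (im a)) = g a.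
Proof. apply im_inj. apply im_repr. Qed.

Lemma image_ind (P : image -> Prop) : (forall a, P (im a)) -> forall y, P y.
Proof. intros H y. rewrite <- (im_repr y). apply H. Qed.

End Image.

Arguments im {A B} g a.
Arguments repr {A B g} y.

Section Inverses.
Variables (S : Type) (m : S -> S -> S).
Hypothesis assoc : associative_op m.

Definition is_inverse (a z : S) : Prop := m (m a z) a = a /\ m (m z a) z = z.

Lemma is_inverse_sym a z : is_inverse a z -> is_inverse z a.
Proof. intros [H1 H2]. split; assumption. Qed.

Lemma idempotent_mul_inverse a z : is_inverse a z -> idempotent m (m a z).
Proof. intros [H1 _]. unfold idempotent. assoc_norm. rw_word H1. reflexivity. Qed.

Lemma idempotent_inverse_mul a z : is_inverse a z -> idempotent m (m z a).
Proof. intros [_ H2]. unfold idempotent. assoc_norm. rw_word H2. reflexivity. Qed.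

Lemma is_inverse_idempotent e : idempotent m e -> is_inverse e e.
Proof. intro He. unfold idempotent in He. split; rewrite !He; reflexivity. Qed.

Lemma regular_is_inverse : regular m -> forall a, exists z, is_inverse a z.
Proof.
  intros reg a. destruct (reg a) as [x H]. exists (m (m x a) x).
  split; assoc_norm; rw_word H; rw_word H; reflexivity.
Qed.

End Inverses.

Lemma inverse_semigroup_of_idempotents_commute (T : Type) (mT : T -> T -> T) (inv : T -> T) :
  associative_op mT ->
  (forall t, is_inverse mT t (inv t)) ->
  (forall e f, idempotent mT e -> idempotent mT f -> mT e f = mT f e) ->
  inverse_semigroup_with mT inv.
Proof.
  intros assocT inv_inverse comm. split; [exact inv_inverse |].
  intros t s H1 H2. destruct (inv_inverse t) as [J1 J2].
  pose proof (idempotent_inverse_mul assocT (conj H1 H2)) as Est.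
  pose proof (idempotent_mul_inverse assocT (conj H1 H2)) as Ets.
  pose proof (idempotent_inverse_mul assocT (inv_inverse t)) as Eit.
  pose proof (idempotent_mul_inverse assocT (inv_inverse t)) as Eti.
  transitivity (mT (mT (inv t) t) s).
  - via (mT (mT (mT (mT s t) (inv t)) t) s).
    + rw_word J1. rw_word H2. reflexivity.
    + rw_word (comm _ _ Est Eit). rw_word H1. reflexivity.
  - symmetry. via (mT (mT (mT (mT (inv t) t) s) t) (inv t)).
    + rw_word H1. rw_word J2. reflexivity.
    + rw_word (comm _ _ Ets Eti). rw_word J2. reflexivity.
Qed.

Section InverseSemigroup.
Variables (T : Type) (mT : T -> T -> T) (inv : T -> T).
Hypotheses (assocT : associative_op mT) (invT : inverse_semigroup_with mT inv).

Lemma inv_is_inverse t : is_inverse mT t (inv t).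
Proof. exact (proj1 invT t). Qed.

Lemma is_inverse_inv t s : is_inverse mT t s -> s = inv t.
Proof. intros [H1 H2]. exact (proj2 invT t s H1 H2). Qed.

Lemma inv_idempotent e : idempotent mT e -> inv e = e.
Proof. intro He. symmetry. apply is_inverse_inv, is_inverse_idempotent, He. Qed.

Lemma idempotent_mul_inv t : idempotent mT (mT t (inv t)).
Proof. exact (idempotent_mul_inverse assocT (inv_is_inverse t)). Qed.

Lemma idempotent_inv_mul t : idempotent mT (mT (inv t) t).
Proof. exact (idempotent_inverse_mul assocT (inv_is_inverse t)). Qed.

(* [f x e] is an inverse of [e f] whenever [x] is; by uniqueness it equals [x],
   which is then idempotent and its own inverse. *)
Lemma idempotent_mul e f : idempotent mT e -> idempotent mT f -> idempotent mT (mT e f).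
Proof.
  intros He Hf. unfold idempotent in He, Hf.
  set (x := inv (mT e f)).
  destruct (inv_is_inverse (mT e f)) as [Hx1 Hx2]. fold x in Hx1, Hx2.
  assoc_norm_in Hx1. assoc_norm_in Hx2.
  assert (Ex : mT (mT f x) e = x).
  { apply is_inverse_inv. split; assoc_norm.
    - rw_word Hf. rw_word He. exact Hx1.
    - rw_word He. rw_word Hf. rw_word Hx2. reflexivity. }
  assert (Hxx : mT x x = x)
    by (rewrite <- Ex at 1 2; assoc_norm; rw_word Hx2; assoc_norm; exact Ex).
  assert (E1 : mT e f = inv x) by (apply is_inverse_inv; split; assoc_norm; assumption).
  assert (E2 : x = inv x) by (apply is_inverse_inv; split; rewrite !Hxx; reflexivity).
  unfold idempotent. rewrite E1, <- E2. exact Hxx.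
Qed.

Lemma idempotent_comm e f : idempotent mT e -> idempotent mT f -> mT e f = mT f e.
Proof.
  intros He Hf.
  pose proof (idempotent_mul He Hf) as Hef. pose proof (idempotent_mul Hf He) as Hfe.
  rewrite (is_inverse_inv (is_inverse_idempotent Hef)).
  symmetry. apply is_inverse_inv. unfold idempotent in *. split; assoc_norm.
  - rw_word He. rw_word Hf. rw_word Hef. reflexivity.
  - rw_word Hf. rw_word He. rw_word Hfe. reflexivity.
Qed.

Lemma inv_mul t u : inv (mT t u) = mT (inv u) (inv t).
Proof.
  pose proof (idempotent_comm (idempotent_mul_inv u) (idempotent_inv_mul t)) as C.
  destruct (inv_is_inverse t) as [Jt1 Jt2]. destruct (inv_is_inverse u) as [Ju1 Ju2].
  symmetry. apply is_inverse_inv. split; assoc_norm.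
  - rw_word C. rw_word Jt1. rw_word Ju1. reflexivity.
  - rw_word <- C. rw_word Jt2. rw_word Ju2. reflexivity.
Qed.

Lemma inv_mul_absorb_l t u :
  mT (mT (inv u) u) (mT (inv (mT t u)) (mT t u)) = mT (inv (mT t u)) (mT t u).
Proof.
  rewrite inv_mul. destruct (inv_is_inverse u) as [_ J]. assoc_norm. rw_word J. reflexivity.
Qed.

Lemma inv_mul_absorb_r t u :
  mT (mT (inv (mT t u)) (mT t u)) (mT (inv u) u) = mT (inv (mT t u)) (mT t u).
Proof.
  rewrite (idempotent_comm (idempotent_inv_mul _) (idempotent_inv_mul _)).
  apply inv_mul_absorb_l.
Qed.

Lemma mul_inv_absorb t u :
  mT (mT (mT t u) (inv (mT t u))) (mT t (inv t)) = mT (mT t u) (inv (mT t u)).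
Proof.
  rewrite inv_mul. destruct (inv_is_inverse t) as [_ J]. assoc_norm. rw_word J. reflexivity.
Qed.

End InverseSemigroup.

Section GeneralizedInverse.
Variables (S : Type) (m : S -> S -> S).
Hypotheses (assoc : associative_op m)
  (idempotent_closed : forall e f, idempotent m e -> idempotent m f -> idempotent m (m e f)).

Lemma is_inverse_mul a a' c c' :
  is_inverse m a a' -> is_inverse m c c' -> is_inverse m (m c a) (m a' c').
Proof.
  intros Ha Hc.
  pose proof (idempotent_inverse_mul assoc Hc) as Ec'c.
  pose proof (idempotent_mul_inverse assoc Ha) as Eaa'.
  pose proof (idempotent_closed Ec'c Eaa') as E1. pose proof (idempotent_closed Eaa' Ec'c) as E2.
  unfold idempotent in E1, E2. destruct Ha as [Ha1 Ha2], Hc as [Hc1 Hc2].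
  split.
  - via (m (m (m (m c (m c' c)) (m a a')) (m (m c' c) (m a a'))) a).
    + rw_word Hc1. rw_word Ha1. reflexivity.
    + rw_word E1. rw_word Hc1. rw_word Ha1. reflexivity.
  - via (m (m (m (m a' (m a a')) (m c' c)) (m (m a a') (m c' c))) c').
    + rw_word Ha2. rw_word Hc2. reflexivity.
    + rw_word E2. rw_word Ha2. rw_word Hc2. reflexivity.
Qed.

Hypothesis normal : idempotents_normal_band m.

Lemma is_inverse_of_common_inverse a b x y :
  is_inverse m a x -> is_inverse m b x -> is_inverse m a y -> is_inverse m b y.
Proof.
  intros Hax Hbx Hay.
  pose proof (idempotent_inverse_mul assoc Hax) as Exa.
  pose proof (idempotent_mul_inverse assoc Hax) as Eax.
  pose proof (idempotent_inverse_mul assoc Hbx) as Exb.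
  pose proof (idempotent_mul_inverse assoc Hbx) as Ebx.
  pose proof (idempotent_inverse_mul assoc Hay) as Eya.
  pose proof (idempotent_mul_inverse assoc Hay) as Eay.
  destruct Hax as [Hax1 Hax2], Hbx as [Hbx1 Hbx2], Hay as [Hay1 Hay2].
  assert (F1 : m (m x b) (m y a) = m x a).
  { via (m (m (m (m x a) (m x b)) (m y a)) (m x a)).
    - rw_word Hax2. rw_word Hax1. reflexivity.
    - rw_word (normal Exa Exb Eya). rw_word Hay1. rw_word Hax2. rw_word Hbx2. reflexivity. }
  assert (F2 : m (m a y) (m b x) = m a x).
  { via (m (m (m (m a x) (m a y)) (m b x)) (m a x)).
    - rw_word Hax1. rw_word Hax2. reflexivity.
    - rw_word (normal Eax Eay Ebx). rw_word Hbx2. rw_word Hax1. rw_word Hay1. reflexivity. }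
  assert (Kx : m (m (m (m x b) y) b) x = x).
  { via (m (m (m (m (m x b) (m y a)) y) (m a y)) (m b x)).
    - rw_word Hay2. rw_word Hay2. reflexivity.
    - rw_word F2. rw_word F1. rw_word Hay1. rw_word Hax2. reflexivity. }
  assert (Ka : m (m (m (m a y) b) y) a = a).
  { via (m (m (m (m (m a y) b) x) b) (m y a)).
    - rw_word Hbx1. reflexivity.
    - rw_word F2. rw_word F1. rw_word Hax1. reflexivity. }
  split.
  - via (m (m (m (m (m (m b x) b) y) b) x) b).
    + rw_word Hbx1. rw_word Hbx1. reflexivity.
    + rw_word Kx. rw_word Hbx1. reflexivity.
  - via (m (m (m (m (m (m y a) y) b) y) a) y).
    + rw_word Hay2. rw_word Hay2. reflexivity.
    + rw_word Ka. rw_word Hay2. reflexivity.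
Qed.

Lemma inverses_eq_of_common_inverse a b x :
  is_inverse m a x -> is_inverse m b x -> is_inverse m a = is_inverse m b.
Proof.
  intros Ha Hb. apply functional_extensionality. intro y. apply propositional_extensionality.
  split; intro Hy; [exact (is_inverse_of_common_inverse Ha Hb Hy)
                   | exact (is_inverse_of_common_inverse Hb Ha Hy)].
Qed.

Hypothesis reg : regular m.

Lemma inverses_mul_compat a a' b b' :
  is_inverse m a = is_inverse m a' -> is_inverse m b = is_inverse m b' ->
  is_inverse m (m a b) = is_inverse m (m a' b').
Proof.
  intros Ea Eb.
  destruct (regular_is_inverse assoc reg a) as [x Hx].
  destruct (regular_is_inverse assoc reg b) as [y Hy].
  apply inverses_eq_of_common_inverse with (x := m y x); apply is_inverse_mul; auto.
  - rewrite <- Eb. exact Hy.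
  - rewrite <- Ea. exact Hx.
Qed.

(* In a normal band [e k f = (e k e) (f k f)], and [k g k = k h k] when [g] and [h]
   are mutually inverse. *)
Lemma idempotent_sandwich_idempotents e f g h :
  idempotent m e -> idempotent m f -> idempotent m g -> idempotent m h ->
  m (m h g) h = h -> m (m g h) g = g -> m (m e g) f = m (m e h) f.
Proof.
  intros Ee Ef Eg Eh Hhgh Hghg.
  assert (Sep : forall k, idempotent m k -> m (m e k) f = m (m (m (m (m e k) e) f) k) f).
  { intros k Ek. transitivity (m (m (m e k) f) (m (m e k) f)).
    - symmetry. apply (idempotent_closed (idempotent_closed Ee Ek) Ef).
    - assoc_norm. rw_word (normal Ek Ef Ee). reflexivity. }
  assert (Swap : forall k, idempotent m k -> m (m k g) k = m (m k h) k).
  { intros k Ek. transitivity (m (m (m k g) h) k).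
    - via (m (m (m (m k g) h) g) k).
      + rw_word Hghg. reflexivity.
      + rw_word (normal Ek Eg (idempotent_closed Eh Eg)). rw_word Eg.
        rw_word (normal Ek Eh Eg). reflexivity.
    - symmetry. via (m (m (m (m k h) g) h) k).
      + rw_word Hhgh. reflexivity.
      + rw_word (normal Ek Eh (idempotent_closed Eg Eh)). rw_word Eh. reflexivity. }
  rewrite (Sep g Eg), (Sep h Eh). assoc_norm.
  rw_word (Swap e Ee). rw_word (Swap f Ef). reflexivity.
Qed.

Lemma idempotent_sandwich g h x y :
  idempotent m g -> idempotent m h -> is_inverse m g = is_inverse m h ->
  m (m x g) y = m (m x h) y.
Proof.
  intros Eg Eh E.
  assert (Hhg : is_inverse m h g) by (rewrite <- E; apply is_inverse_idempotent, Eg).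
  destruct Hhg as [Hhgh Hghg].
  destruct (regular_is_inverse assoc reg x) as [x' Hx].
  destruct (regular_is_inverse assoc reg y) as [y' Hy].
  pose proof (idempotent_inverse_mul assoc Hx) as Ex.
  pose proof (idempotent_mul_inverse assoc Hy) as Ey.
  destruct Hx as [Hx _], Hy as [Hy _].
  via (m (m (m (m x (m x' x)) g) (m y y')) y).
  - rw_word Hx. rw_word Hy. reflexivity.
  - rw_word (idempotent_sandwich_idempotents Ex Ey Eg Eh Hhgh Hghg).
    rw_word Hx. rw_word Hy. reflexivity.
Qed.

End GeneralizedInverse.

Section LeftRightZeroBand.
Variables (L R : Type).

Definition lr_mul (p q : L * R) : L * R := (fst p, snd q).

Lemma lr_mul_assoc : associative_op lr_mul.
Proof. intros x y z. reflexivity. Qed.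

Lemma lr_mul_rectangular : rectangular_band lr_mul.
Proof. split; [intros [a b] | intros x y z]; reflexivity. Qed.

Variables (T : Type) (mT : T -> T -> T) (actL : T -> L -> L) (actR : T -> R -> R).

Definition lr_act (t : T) (p : L * R) : L * R := (actL t (fst p), actR t (snd p)).

Lemma lr_semigroup_action :
  (forall t u a, actL (mT t u) a = actL t (actL u a)) ->
  (forall t u b, actR (mT t u) b = actR t (actR u b)) ->
  semigroup_action lr_mul mT lr_act.
Proof.
  intros HL HR. split; [reflexivity |].
  intros t u [a b]. unfold lr_act; simpl. rewrite HL, HR. reflexivity.
Qed.

End LeftRightZeroBand.

Arguments lr_mul {L R} p q.

Section LambdaEmbedding.
Variables (S : Type) (m : S -> S -> S).
Hypotheses (assoc : associative_op m)
  (idempotent_closed : forall e f, idempotent m e -> idempotent m f -> idempotent m (m e f))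
  (normal : idempotents_normal_band m) (reg : regular m).
Variable star : S -> S.
Hypothesis star_inverse : forall a, is_inverse m a (star a).

(* S modulo [a ~ b <-> V(a) = V(b)]; the class of [a] is represented by V(a). *)
Definition Sg : Type := image (is_inverse m).

Local Notation cls := (im (is_inverse m)).

Definition Sg_mul (t u : Sg) : Sg := cls (m (repr t) (repr u)).

Definition Sg_inv (t : Sg) : Sg := cls (star (repr t)).

Lemma cls_eq_of_common_inverse a b x :
  is_inverse m a x -> is_inverse m b x -> cls a = cls b.
Proof. intros Ha Hb. apply im_eq. exact (inverses_eq_of_common_inverse assoc normal Ha Hb). Qed.

Lemma Sg_mul_cls a b : Sg_mul (cls a) (cls b) = cls (m a b).
Proof. apply im_eq, inverses_mul_compat; auto; apply repr_im. Qed.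

Lemma Sg_inv_cls a z : is_inverse m a z -> Sg_inv (cls a) = cls z.
Proof.
  intro Hz. apply cls_eq_of_common_inverse with (x := a); apply is_inverse_sym; [| exact Hz].
  rewrite <- (repr_im (is_inverse m) a). apply star_inverse.
Qed.

Lemma Sg_assoc : associative_op Sg_mul.
Proof.
  intros t u v.
  induction t using image_ind. induction u using image_ind. induction v using image_ind.
  rewrite !Sg_mul_cls, assoc. reflexivity.
Qed.

(* Lallement's lemma for this congruence. *)
Lemma Sg_idempotent_lift t : idempotent Sg_mul t -> exists e, idempotent m e /\ t = cls e.
Proof.
  induction t as [u] using image_ind. unfold idempotent. rewrite Sg_mul_cls. intro Hu.
  destruct (star_inverse (m u u)) as [Hx1 Hx2]. set (x := star (m u u)) in Hx1, Hx2.
  exists (m (m u x) u). split.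
  - unfold idempotent. assoc_norm. assoc_norm_in Hx2. rw_word Hx2. reflexivity.
  - rewrite <- !Sg_mul_cls, <- Hu, !Sg_mul_cls, Hx1, Hu. reflexivity.
Qed.

Lemma cls_idempotent_comm e f :
  idempotent m e -> idempotent m f -> cls (m e f) = cls (m f e).
Proof.
  intros He Hf.
  pose proof (idempotent_closed He Hf) as Hef. pose proof (idempotent_closed Hf He) as Hfe.
  apply cls_eq_of_common_inverse with (x := m f e); [| apply is_inverse_idempotent, Hfe].
  unfold idempotent in *. split; assoc_norm.
  - rw_word Hf. rw_word He. rw_word Hef. reflexivity.
  - rw_word He. rw_word Hf. rw_word Hfe. reflexivity.
Qed.

Lemma Sg_inverse : inverse_semigroup_with Sg_mul Sg_inv.
Proof.
  apply inverse_semigroup_of_idempotents_commute; [exact Sg_assoc | |].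
  - intro t. induction t as [a] using image_ind. rewrite (Sg_inv_cls (star_inverse a)).
    destruct (star_inverse a) as [H1 H2].
    split; rewrite !Sg_mul_cls; [rewrite H1 | rewrite H2]; reflexivity.
  - intros p q Hp Hq.
    destruct (Sg_idempotent_lift Hp) as [e [He ->]], (Sg_idempotent_lift Hq) as [f [Hf ->]].
    rewrite !Sg_mul_cls. apply cls_idempotent_comm; assumption.
Qed.

Lemma cls_idempotent_sandwich g h x y :
  idempotent m g -> idempotent m h -> cls g = cls h -> m (m x g) y = m (m x h) y.
Proof.
  intros Hg Hh E.
  exact (idempotent_sandwich assoc idempotent_closed normal reg x y Hg Hh (im_inj E)).
Qed.

Definition dom_idem (v : Sg) : S := m (star (repr v)) (repr v).

Lemma dom_idem_idempotent v : idempotent m (dom_idem v).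
Proof. apply idempotent_inverse_mul; [exact assoc | apply star_inverse]. Qed.

Lemma cls_dom_idem v : cls (dom_idem v) = Sg_mul (Sg_inv v) v.
Proof. unfold dom_idem. rewrite <- Sg_mul_cls, im_repr. reflexivity. Qed.

Lemma cls_dom_idem_cls a z : is_inverse m a z -> cls (dom_idem (cls a)) = cls (m z a).
Proof. intro Hz. rewrite cls_dom_idem, (Sg_inv_cls Hz), Sg_mul_cls. reflexivity. Qed.

Lemma cls_dom_idem_idempotent e : idempotent m e -> cls (dom_idem (cls e)) = cls e.
Proof.
  intro He. rewrite (cls_dom_idem_cls (is_inverse_idempotent He)). unfold idempotent in He.
  rewrite He. reflexivity.
Qed.

Definition right_mul (e k : S) : S := m k e.

Definition LeftPart : Type := (Sg * image m)%type.
Definition RightPart : Type := (Sg * image right_mul)%type.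

(* Acting by [t] multiplies the tag [s] and inserts an idempotent of class
   (ts)^-1 ts; these insertions compose because (tw)^-1 tw <= w^-1 w. *)
Definition act_left (t : Sg) (p : LeftPart) : LeftPart :=
  let s := Sg_mul t (fst p) in (s, im m (m (repr (snd p)) (dom_idem s))).

Definition act_right (t : Sg) (p : RightPart) : RightPart :=
  let s := Sg_mul t (fst p) in (s, im right_mul (m (dom_idem s) (repr (snd p)))).

Lemma act_left_im t s e :
  act_left t (s, im m e) = (Sg_mul t s, im m (m e (dom_idem (Sg_mul t s)))).
Proof.
  unfold act_left; simpl. f_equal. apply im_eq, functional_extensionality. intro k.
  rewrite <- !assoc, (repr_im m e). reflexivity.
Qed.

Lemma act_right_im t s e :
  act_right t (s, im right_mul e) = (Sg_mul t s, im right_mul (m (dom_idem (Sg_mul t s)) e)).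
Proof.
  unfold act_right; simpl. f_equal. apply im_eq, functional_extensionality. intro k.
  unfold right_mul. rewrite !assoc. exact (f_equal (fun G => G _) (repr_im right_mul e)).
Qed.

Lemma act_left_mul t u p : act_left (Sg_mul t u) p = act_left t (act_left u p).
Proof.
  destruct p as [s F]. induction F as [e] using image_ind.
  rewrite !act_left_im, <- Sg_assoc. f_equal. apply im_eq, functional_extensionality. intro k.
  set (w := Sg_mul u s). rewrite <- (assoc e (dom_idem w)).
  apply cls_idempotent_sandwich;
    [apply dom_idem_idempotent | apply idempotent_closed; apply dom_idem_idempotent |].
  rewrite <- Sg_mul_cls, !cls_dom_idem. symmetry. apply (inv_mul_absorb_l Sg_assoc Sg_inverse).
Qed.

Lemma act_right_mul t u p : act_right (Sg_mul t u) p = act_right t (act_right u p).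
Proof.
  destruct p as [s G]. induction G as [e] using image_ind.
  rewrite !act_right_im, <- Sg_assoc. f_equal. apply im_eq, functional_extensionality. intro k.
  set (w := Sg_mul u s). unfold right_mul. rewrite !assoc, <- (assoc k _ (dom_idem w)).
  apply cls_idempotent_sandwich;
    [apply dom_idem_idempotent | apply idempotent_closed; apply dom_idem_idempotent |].
  rewrite <- Sg_mul_cls, !cls_dom_idem. symmetry. apply (inv_mul_absorb_r Sg_assoc Sg_inverse).
Qed.

Definition act_parts : Sg -> LeftPart * RightPart -> LeftPart * RightPart :=
  lr_act act_left act_right.

Definition embed (x : S) : (LeftPart * RightPart) * Sg :=
  ((cls (m x (star x)), im m (m x (star x))), (cls x, im right_mul (m (star x) x)), cls x).

Lemma embed_injective x y : embed x = embed y -> x = y.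
Proof.
  unfold embed. intro E. injection E as _ El Et Er _.
  assert (Hy : is_inverse m y (star x)) by (rewrite <- Et; apply star_inverse).
  destruct (star_inverse x) as [Hx1 _], Hy as [Hy1 Hy2], (star_inverse y) as [Hy'1 _].
  assert (Rx : m x (star x) = m y (star x)).
  { pose proof (f_equal (fun F => F (m y (star x))) El) as Q. simpl in Q. assoc_norm_in Q.
    via (m (m (m x (star x)) y) (star x)).
    - rw_word Hy2. reflexivity.
    - rewrite Q. rw_word Hy'1. reflexivity. }
  assert (Lx : m (star x) x = m (star x) y).
  { pose proof (f_equal (fun G => G (m (star x) y)) Er) as Q. unfold right_mul in Q.
    assoc_norm_in Q.
    via (m (m (m (star x) y) (star x)) x).
    - rw_word Hy2. reflexivity.
    - rewrite Q. rw_word Hy'1. reflexivity. }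
  via (m (m x (star x)) x).
  - rw_word Hx1. reflexivity.
  - rw_word Rx. rw_word Lx. rw_word Hy1. reflexivity.
Qed.

Lemma embed_carrier x : lsd_carrier Sg_mul Sg_inv act_parts (embed x).
Proof.
  pose proof (idempotent_mul_inverse assoc (star_inverse x)) as Exx.
  destruct (star_inverse x) as [Hx1 Hx2].
  unfold lsd_carrier, embed, act_parts, lr_act; simpl.
  rewrite (Sg_inv_cls (star_inverse x)), !Sg_mul_cls, act_left_im, act_right_im, !Sg_mul_cls.
  unfold idempotent in Exx. rewrite Exx. assoc_norm. rw_word Hx1.
  f_equal; f_equal; apply im_eq, functional_extensionality; intro k; unfold right_mul.
  - rw_word (cls_idempotent_sandwich (m x (star x)) k (dom_idem_idempotent _) Exx
               (cls_dom_idem_idempotent Exx)).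
    rw_word Hx1. reflexivity.
  - assoc_norm.
    rw_word (cls_idempotent_sandwich k (m (star x) x) (dom_idem_idempotent _)
               (idempotent_inverse_mul assoc (star_inverse x))
               (cls_dom_idem_cls (star_inverse x))).
    rw_word Hx2. reflexivity.
Qed.

Lemma cls_mul_star_absorb x y :
  cls (m (m (m x y) (star (m x y))) (m x (star x))) = cls (m (m x y) (star (m x y))).
Proof.
  pose proof (mul_inv_absorb Sg_assoc Sg_inverse (cls x) (cls y)) as H.
  rewrite Sg_mul_cls, !(Sg_inv_cls (star_inverse _)), !Sg_mul_cls in H. exact H.
Qed.

Lemma embed_mul x y :
  embed (m x y) = lsd_mul lr_mul Sg_mul Sg_inv act_parts (embed x) (embed y).
Proof.
  pose proof (idempotent_mul_inverse assoc (star_inverse (m x y))) as Exy.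
  unfold embed, lsd_mul, act_parts, lr_act, lr_mul; simpl.
  rewrite !Sg_mul_cls, (Sg_inv_cls (star_inverse (m x y))), Sg_mul_cls,
    act_left_im, act_right_im, !Sg_mul_cls, cls_mul_star_absorb.
  f_equal; f_equal; f_equal; apply im_eq, functional_extensionality; intro k; unfold right_mul;
    symmetry; assoc_norm.
  - rw_word (cls_idempotent_sandwich (m x (star x)) k (dom_idem_idempotent _) Exy
               (cls_dom_idem_idempotent Exy)).
    rw_word (proj1 (star_inverse x)). reflexivity.
  - rw_word (cls_idempotent_sandwich k (m (star y) y) (dom_idem_idempotent _)
               (idempotent_inverse_mul assoc (star_inverse (m x y)))
               (cls_dom_idem_cls (star_inverse (m x y)))).
    rw_word (proj1 (star_inverse y)). reflexivity.
Qed.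

Lemma generalized_inverse_lsd_embedding :
  exists (K T : Type) (mK : K -> K -> K) (mT : T -> T -> T)
         (inv : T -> T) (act : T -> K -> K),
    associative_op mK /\ rectangular_band mK /\
    associative_op mT /\ inverse_semigroup_with mT inv /\
    semigroup_action mK mT act /\
    exists f : S -> K * T,
      (forall x y, f x = f y -> x = y) /\
      (forall x, lsd_carrier mT inv act (f x)) /\
      (forall x y, f (m x y) = lsd_mul mK mT inv act (f x) (f y)).
Proof.
  exists (LeftPart * RightPart)%type, Sg, lr_mul, Sg_mul, Sg_inv, act_parts.
  split; [apply lr_mul_assoc |]. split; [apply lr_mul_rectangular |].
  split; [exact Sg_assoc |]. split; [exact Sg_inverse |].
  split; [apply lr_semigroup_action; [exact act_left_mul | exact act_right_mul] |].
  exists embed. split; [exact embed_injective |]. split; [exact embed_carrier | exact embed_mul].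
Qed.

End LambdaEmbedding.

Section LambdaIdempotents.
Variables (K T : Type) (mK : K -> K -> K) (mT : T -> T -> T) (inv : T -> T) (act : T -> K -> K).
Hypotheses (rectK : rectangular_band mK) (assocT : associative_op mT)
  (invT : inverse_semigroup_with mT inv) (actK : semigroup_action mK mT act).

Definition lsd_idempotent (p : K * T) : Prop :=
  idempotent mT (snd p) /\ act (snd p) (fst p) = fst p.

Local Notation lmul := (lsd_mul mK mT inv act).

Lemma lsd_idempotent_of_idempotent p :
  lsd_carrier mT inv act p -> lmul p p = p -> lsd_idempotent p.
Proof.
  destruct p as [a t]. unfold lsd_carrier, lsd_mul; simpl. intros Hc Hp.
  injection Hp as _ Ht. split; [exact Ht |]. simpl.
  rewrite (inv_idempotent invT Ht) in Hc. unfold idempotent in Ht. rewrite Ht in Hc. exact Hc.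
Qed.

Lemma act_mul_fixed t u a :
  idempotent mT t -> idempotent mT u -> act t a = a -> act (mT t u) a = act u a.
Proof.
  intros Ht Hu Ha. rewrite (idempotent_comm assocT invT Ht Hu), (proj2 actK), Ha. reflexivity.
Qed.

Lemma lsd_mul_idempotents a t b u :
  lsd_idempotent (a, t) -> lsd_idempotent (b, u) ->
  lmul (a, t) (b, u) = (mK (act u a) (act t b), mT t u).
Proof.
  intros [Ht Ha] [Hu Hb]; simpl in *.
  pose proof (idempotent_mul assocT invT Ht Hu) as Htu.
  unfold lsd_mul; simpl. rewrite (inv_idempotent invT Htu). unfold idempotent in Htu.
  rewrite Htu, (act_mul_fixed Ht Hu Ha). reflexivity.
Qed.

Lemma lsd_idempotent_mul p q :
  lsd_idempotent p -> lsd_idempotent q -> lsd_idempotent (lmul p q).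
Proof.
  destruct p as [a t], q as [b u]. intros Hp Hq. rewrite (lsd_mul_idempotents Hp Hq).
  destruct Hp as [Ht Ha], Hq as [Hu Hb]; simpl in *. destruct actK as [act_hom act_mul].
  split; simpl; [exact (idempotent_mul assocT invT Ht Hu) |].
  rewrite act_hom, <- !act_mul, <- !assocT. unfold idempotent in Hu. rewrite Hu.
  rewrite (act_mul_fixed Ht Hu Ha), (idempotent_comm assocT invT Hu Ht), assocT.
  unfold idempotent in Ht. rewrite Ht, act_mul, Hb. reflexivity.
Qed.

Lemma lsd_idempotent_idem p : lsd_idempotent p -> lmul p p = p.
Proof.
  destruct p as [a t]. intro Hp. rewrite (lsd_mul_idempotents Hp Hp).
  destruct Hp as [Ht Ha]; simpl in *. unfold idempotent in Ht. rewrite Ha, (proj1 rectK), Ht.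
  reflexivity.
Qed.

Lemma lsd_mul_idempotents_pqrp a t b u c v :
  lsd_idempotent (a, t) -> lsd_idempotent (b, u) -> lsd_idempotent (c, v) ->
  lmul (lmul (lmul (a, t) (b, u)) (c, v)) (a, t) = (act (mT (mT t u) v) a, mT (mT t u) v).
Proof.
  intros Hp Hq Hr.
  pose proof (lsd_idempotent_mul Hp Hq) as Hpq. rewrite (lsd_mul_idempotents Hp Hq) in *.
  pose proof (lsd_idempotent_mul Hpq Hr) as Hpqr. rewrite (lsd_mul_idempotents Hpq Hr) in *.
  rewrite (lsd_mul_idempotents Hpqr Hp).
  destruct Hp as [Ht Ha], Hq as [Hu _], Hr as [Hv _], Hpqr as [Htuv _]; simpl in *.
  destruct rectK as [mK_idem mK_rect], actK as [act_hom act_mul].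
  rewrite !act_hom, !mK_rect, <- !act_mul.
  assert (Evu : mT (mT t v) u = mT (mT t u) v)
    by (rewrite <- !assocT, (idempotent_comm assocT invT Hv Hu); reflexivity).
  assert (Ew : mT (mT (mT t u) v) t = mT (mT t u) v).
  { rewrite (idempotent_comm assocT invT Htuv Ht), !assocT. unfold idempotent in Ht. rewrite Ht.
    reflexivity. }
  rewrite Evu, mK_idem, Ew. reflexivity.
Qed.

Lemma lsd_idempotents_normal p q r :
  lsd_idempotent p -> lsd_idempotent q -> lsd_idempotent r ->
  lmul (lmul (lmul p q) r) p = lmul (lmul (lmul p r) q) p.
Proof.
  destruct p as [a t], q as [b u], r as [c v]. intros Hp Hq Hr.
  rewrite (lsd_mul_idempotents_pqrp Hp Hq Hr), (lsd_mul_idempotents_pqrp Hp Hr Hq).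
  destruct Hq as [Hu _], Hr as [Hv _]; simpl in Hu, Hv.
  rewrite <- !assocT, (idempotent_comm assocT invT Hu Hv). reflexivity.
Qed.

End LambdaIdempotents.

Lemma generalized_inverse_of_embedding (S P : Type) (m : S -> S -> S) (mP : P -> P -> P)
  (f : S -> P) (I : P -> Prop) :
  regular m ->
  (forall x y, f x = f y -> x = y) ->
  (forall x y, f (m x y) = mP (f x) (f y)) ->
  (forall e, idempotent m e -> I (f e)) ->
  (forall p q, I p -> I q -> I (mP p q)) ->
  (forall p, I p -> mP p p = p) ->
  (forall p q r, I p -> I q -> I r -> mP (mP (mP p q) r) p = mP (mP (mP p r) q) p) ->
  generalized_inverse m.
Proof.
  intros reg f_inj f_mul I_image I_mul I_idem I_normal.
  assert (closed : forall e g, idempotent m e -> idempotent m g -> idempotent m (m e g)).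
  { intros e g He Hg. apply f_inj. rewrite !f_mul.
    apply I_idem, I_mul; apply I_image; assumption. }
  split; [split; [exact reg | exact closed] |].
  intros e g h He Hg Hh. apply f_inj. rewrite !f_mul. apply I_normal; apply I_image; assumption.
Qed.

Theorem proposition6p2 (S : Type) (mS : S -> S -> S)
  (assocS : associative_op mS) (regS : regular mS) :
  generalized_inverse mS <->
  exists (K T : Type) (mK : K -> K -> K) (mT : T -> T -> T)
         (inv : T -> T) (act : T -> K -> K),
    associative_op mK /\ rectangular_band mK /\
    associative_op mT /\ inverse_semigroup_with mT inv /\
    semigroup_action mK mT act /\
    exists f : S -> K * T,
      (forall x y, f x = f y -> x = y) /\
      (forall x, lsd_carrier mT inv act (f x)) /\
      (forall x y, f (mS x y) = lsd_mul mK mT inv act (f x) (f y)).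
Proof.
  split.
  - intros [[_ idempotent_closed] normal].
    destruct (functional_choice _ (regular_is_inverse assocS regS)) as [star star_inverse].
    exact (generalized_inverse_lsd_embedding
             assocS idempotent_closed normal regS star star_inverse).
  - intros (K & T & mK & mT & inv & act & _ & rectK & assocT & invT & actK &
            f & f_inj & f_car & f_mul).
    apply (generalized_inverse_of_embedding _ f (lsd_idempotent mT act) regS f_inj f_mul).
    + intros e He. apply (lsd_idempotent_of_idempotent (mK := mK) invT (f_car e)).
      rewrite <- f_mul. unfold idempotent in He. rewrite He. reflexivity.
    + exact (lsd_idempotent_mul assocT invT actK).
    + exact (lsd_idempotent_idem rectK assocT invT actK).
    + exact (lsd_idempotents_normal rectK assocT invT actK).
Qed.
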